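(* Let $M,N\in\mathbb{R}^{(k+n)\times(k+n)}$ be symmetric, partitioned as $M=\begin{bmatrix} M_{11} & M_{12}\\ M_{12}^\top & M_{22}\end{bmatrix}$, $N=\begin{bmatrix} N_{11} & N_{12}\\ N_{12}^\top & N_{22}\end{bmatrix}$ with $M_{11},N_{11}\in\mathbb{R}^{k\times k}$ and $M_{22},N_{22}\in\mathbb{R}^{n\times n}$. Assume $M_{22}\le 0$, $N_{22}\le 0$ and $\ker N_{22}\subseteq\ker N_{12}$, and that there exists $\bar Z\in\mathbb{R}^{n\times k}$ with $\begin{bmatrix} I\\ \bar Z\end{bmatrix}^\top N\begin{bmatrix} I\\ \bar Z\end{bmatrix}>0$. Let $\mathcal{S}_N:=\{Z\in\mathbb{R}^{n\times k}\mid \begin{bmatrix} I\\ Z\end{bmatrix}^\top N\begin{bmatrix} I\\ Z\end{bmatrix}\ge 0\}$. Then $\begin{bmatrix} I\\ Z\end{bmatrix}^\top M\begin{bmatrix} I\\ Z\end{bmatrix}>0$ for all $Z\in\mathcal{S}_N$ if and only if there exist $\alpha\ge 0$ and $\beta>0$ such that $$M-\alpha N\ge\begin{bmatrix}\beta I & 0\\ 0 & 0\end{bmatrix}.$$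
   Context: $I$ denotes the $k\times k$ identity. For symmetric matrices, $\ge 0$ means positive semidefinite, $>0$ positive definite, and $A\ge B$ means $A-B\ge0$. *)

From HB Require Import structures.
From mathcomp Require Import all_boot all_order all_algebra.
From mathcomp Require Import reals.
Set Implicit Arguments. Unset Strict Implicit. Unset Printing Implicit Defensive.
Import Order.TTheory GRing.Theory Num.Theory.
Local Open Scope ring_scope.

Definition sym_mx (R : realType) (m : nat) (A : 'M[R]_m) : Prop := A^T = A.

Definition psd (R : realType) (m : nat) (A : 'M[R]_m) : Prop :=
  forall v : 'cV[R]_m, 0 <= (v^T *m A *m v) 0 0.

Definition pd (R : realType) (m : nat) (A : 'M[R]_m) : Prop :=
  forall v : 'cV[R]_m, v != 0 -> 0 < (v^T *m A *m v) 0 0.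

Definition IZ (R : realType) (k n : nat) (Z : 'M[R]_(n, k)) : 'M[R]_(k + n, k) :=
  col_mx 1%:M Z.

Definition qform (R : realType) (k n : nat) (N : 'M[R]_(k + n)) (Z : 'M[R]_(n, k))
  : 'M[R]_k := (IZ Z)^T *m N *m IZ Z.

Definition S_N (R : realType) (k n : nat) (N : 'M[R]_(k + n)) : 'M[R]_(n, k) -> Prop :=
  fun Z => psd (qform N Z).

(* The converse direction is a one-line computation on w = [v; Z v].  The direct
   direction goes in three steps, all phrased with the bilinear form
   bf A u v = u^T A v on column vectors.
   1. Pointwise positivity: if w = [x; y] with x <> 0 and w^T N w >= 0, then
      w^T M w > 0.  Take Z0 with N22 Z0 = -N12^T (it exists since
      ker N22 <= ker N12); then C := [I;Z0]^T N [I;Z0] > 0, and with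
      c := x^T C x the rank-one update Z := Z0 + c^-1 (y - Z0 x) x^T C maps x
      to y and lies in S_N (by Cauchy-Schwarz for C).
   2. Uniform margin: the directions [0; d] with N22 d = 0 lie in the kernels
      of both N and M, so after projecting them away the set {w^T N w >= 0} is a
      closed cone on which w^T M w is positive away from 0; by compactness of its
      unit sphere, w^T M w >= beta |x|^2 there.
   3. The classical S-lemma (with the Slater point of N) applied to
      M - diag(beta I, 0) and N produces alpha. *)

From HB Require Import structures.
From mathcomp Require Import all_boot all_order all_algebra.
From mathcomp Require Import all_classical all_reals all_analysis.
From mathcomp Require Import lra ring.
Set Implicit Arguments. Unset Strict Implicit. Unset Printing Implicit Defensive.
Import Order.TTheory GRing.Theory Num.Theory numFieldNormedType.Exports.
Local Open Scope ring_scope.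

Section ScalarQuadratics.
Variable R : realType.

Lemma nonneg_quad_linear_coef0 (b c : R) :
  (forall t, 0 <= 2 * t * b + t ^+ 2 * c) -> b = 0.
Proof.
move=> H; apply/eqP/negP => bn0.
pose d := `|c| + 1.
have d_gt0 : 0 < d by rewrite /d ltr_pwDr ?normr_ge0.
have c_le_d : c <= d by rewrite /d; have := ler_norm c; lra.
have value : 2 * (- b / d) * b + (- b / d) ^+ 2 * c = (b ^+ 2 / d ^+ 2) * (c - 2 * d).
  by field; rewrite gt_eqF.
have coef_gt0 : 0 < b ^+ 2 / d ^+ 2.
  apply: divr_gt0; last by rewrite exprn_gt0.
  by rewrite lt_def sqr_ge0 andbT sqrf_eq0; apply/negP.
have : (b ^+ 2 / d ^+ 2) * (c - 2 * d) < 0 by rewrite pmulr_rlt0 //; lra.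
by have := H (- b / d); rewrite value; lra.
Qed.

Lemma pos_quad_nonpos_lead (a b c : R) :
  (forall t, 0 < a + 2 * t * b + t ^+ 2 * c) -> c <= 0 -> c = 0 /\ b = 0.
Proof.
move=> H c_le0.
have c0 : c = 0.
  apply/eqP; rewrite eq_le c_le0 /= leNgt; apply/negP => c_lt0.
  pose s := (`|a| + 1) / (- c) + 1.
  have s_ge1 : 1 <= s by rewrite /s lerDr divr_ge0 // ?addr_ge0 ?normr_ge0 //; lra.
  have cs : c * s = - (`|a| + 1) + c.
    by rewrite /s mulrDr mulr1; congr (_ + _); field; rewrite lt_eqF.
  have s_le_s2 : s <= s ^+ 2 by rewrite expr2; nra.
  have : c * s ^+ 2 <= c * s by nra.
  have := H s; have := H (- s); have := ler_norm a; have := ler_norm (- a).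
  rewrite normrN; nra.
split => //; apply/eqP/negP => bn0.
have := H (- (`|a| + 1) / (2 * b)); rewrite c0 expr2 mulr0 addr0.
have -> : 2 * (- (`|a| + 1) / (2 * b)) * b = - (`|a| + 1) by field; apply/negP.
by have := ler_norm a; lra.
Qed.

(* If G(s,t) = a s^2 + 2 b s t + c t^2 takes both
   signs (a > 0 > c) and G >= 0 implies F >= 0 for F(s,t) = p s^2 + 2 q s t + r t^2,
   then r a - p c >= 0: evaluate F at the two isotropic directions (s_i, a) of G,
   with s_1 > 0 > s_2, and combine with the positive weights -s_2 and s_1. *)
Lemma plane_slemma (a b c p q r : R) : 0 < a -> c < 0 ->
  (forall s t, 0 <= a * s ^+ 2 + 2 * b * s * t + c * t ^+ 2 ->
               0 <= p * s ^+ 2 + 2 * q * s * t + r * t ^+ 2) ->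
  0 <= r * a - p * c.
Proof.
move=> a_gt0 c_lt0 H.
pose D := b ^+ 2 - a * c.
have D_gt0 : 0 < D by rewrite /D; nra.
pose sd := Num.sqrt D.
have sd2 : sd ^+ 2 = D by rewrite /sd sqr_sqrtr // ltW.
have sd_ge0 : 0 <= sd by rewrite /sd sqrtr_ge0.
have sd_gtb : `|b| < sd.
  rewrite ltNge; apply/negP => h.
  have : sd ^+ 2 <= `|b| ^+ 2 by rewrite !expr2; nra.
  by rewrite sd2 /D real_normK ?num_real //; nra.
have := ler_norm b; have := ler_norm (- b); rewrite normrN => nb1 nb2.
pose s1 := - b + sd; pose s2 := - b - sd.
have isotropic s : s = s1 \/ s = s2 -> a * s ^+ 2 + 2 * b * s * a + c * a ^+ 2 = 0.
  have -> : a * s ^+ 2 + 2 * b * s * a + c * a ^+ 2 = a * ((s + b) ^+ 2 - D).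
    by rewrite /D; ring.
  case=> ->; [have -> : s1 + b = sd by rewrite /s1; ring
             | have -> : s2 + b = - sd by rewrite /s2; ring];
  by rewrite ?sqrrN sd2 subrr mulr0.
have F1 : 0 <= p * s1 ^+ 2 + 2 * q * s1 * a + r * a ^+ 2.
  by apply: H; rewrite isotropic //; left.
have F2 : 0 <= p * s2 ^+ 2 + 2 * q * s2 * a + r * a ^+ 2.
  by apply: H; rewrite isotropic //; right.
have key : (s1 - s2) * a * (r * a - p * c) =
   - s2 * (p * s1 ^+ 2 + 2 * q * s1 * a + r * a ^+ 2) +
     s1 * (p * s2 ^+ 2 + 2 * q * s2 * a + r * a ^+ 2) -
   (s1 - s2) * p * (sd ^+ 2 - D).
  by rewrite /s1 /s2 /D; ring.
rewrite sd2 subrr mulr0 subr0 in key.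
have weight_gt0 : 0 < (s1 - s2) * a by apply: mulr_gt0 => //; rewrite /s1 /s2; lra.
have : 0 <= (s1 - s2) * a * (r * a - p * c).
  by rewrite key; apply: addr_ge0; apply: mulr_ge0 => //; rewrite /s1 /s2; lra.
by rewrite pmulr_rge0.
Qed.

End ScalarQuadratics.

Section BilinearForm.
Variables (R : realType) (p : nat).
Implicit Types (A B : 'M[R]_p) (u v : 'cV[R]_p).

Definition bf A u v : R := (u^T *m A *m v) 0 0.

Lemma bfDl A u1 u2 v : bf A (u1 + u2) v = bf A u1 v + bf A u2 v.
Proof. by rewrite /bf linearD /= !mulmxDl mxE. Qed.

Lemma bfDr A u v1 v2 : bf A u (v1 + v2) = bf A u v1 + bf A u v2.
Proof. by rewrite /bf !mulmxDr mxE. Qed.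

Lemma bfZl A s u v : bf A (s *: u) v = s * bf A u v.
Proof. by rewrite /bf linearZ /= -!scalemxAl mxE. Qed.

Lemma bfZr A s u v : bf A u (s *: v) = s * bf A u v.
Proof. by rewrite /bf -!scalemxAr mxE. Qed.

Lemma bf0l A v : bf A 0 v = 0.
Proof. by rewrite /bf linear0 !mul0mx mxE. Qed.

Lemma bfMD A B u v : bf (A + B) u v = bf A u v + bf B u v.
Proof. by rewrite /bf mulmxDr mulmxDl mxE. Qed.

Lemma bfMZ A s u v : bf (s *: A) u v = s * bf A u v.
Proof. by rewrite /bf -scalemxAr -scalemxAl mxE. Qed.

Lemma bfMN A u v : bf (- A) u v = - bf A u v.
Proof. by rewrite -scaleN1r bfMZ mulN1r. Qed.

Lemma bfMB A B u v : bf (A - B) u v = bf A u v - bf B u v.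
Proof. by rewrite bfMD bfMN. Qed.

Lemma bf_mulr A u v : bf A u v = (u^T *m (A *m v)) 0 0.
Proof. by rewrite /bf mulmxA. Qed.

Lemma bf_ker A u v : A *m v = 0 -> bf A u v = 0.
Proof. by move=> Av0; rewrite bf_mulr Av0 mulmx0 mxE. Qed.

Lemma bf_tr A (r : 'rV[R]_p) : bf A r^T r^T = (r *m A *m r^T) 0 0.
Proof. by rewrite /bf trmxK. Qed.

Lemma bf_sym A u v : A^T = A -> bf A u v = bf A v u.
Proof.
move=> sA; rewrite /bf -[in LHS](trmxK (u^T *m A *m v)) mxE.
by rewrite !trmx_mul trmxK sA mulmxA.
Qed.

Lemma bf_expand2 A s t u v : A^T = A ->
  bf A (s *: u + t *: v) (s *: u + t *: v) =
  s ^+ 2 * bf A u u + 2 * s * t * bf A u v + t ^+ 2 * bf A v v.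
Proof. by move=> sA; rewrite !bfDl !bfDr !bfZl !bfZr (bf_sym u v sA); ring. Qed.

Lemma bf_expand A u v : A^T = A ->
  bf A (u + v) (u + v) = bf A u u + 2 * bf A u v + bf A v v.
Proof. by move=> sA; rewrite !bfDl !bfDr (bf_sym v u sA); ring. Qed.

Lemma bf_expand_line A u v t : A^T = A ->
  bf A (u + t *: v) (u + t *: v) = bf A u u + 2 * t * bf A u v + t ^+ 2 * bf A v v.
Proof. by move=> sA; rewrite bf_expand // bfZr bfZl bfZr; ring. Qed.

Lemma dot_sumE u : (u^T *m u) 0 0 = \sum_i u i 0 ^+ 2.
Proof. by rewrite mxE; apply: eq_bigr => i _; rewrite !mxE expr2. Qed.

Lemma dot_ge0 u : 0 <= (u^T *m u) 0 0.
Proof. by rewrite dot_sumE; apply: sumr_ge0 => i _; exact: sqr_ge0. Qed.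

Lemma dot_eq0 u : (u^T *m u) 0 0 = 0 -> u = 0.
Proof.
rewrite dot_sumE => /eqP; rewrite psumr_eq0 => [/allP u0|i _]; last exact: sqr_ge0.
apply/matrixP => i j; rewrite (ord1 j) mxE.
by have := u0 i (mem_index_enum i); rewrite sqrf_eq0 => /eqP.
Qed.

Lemma dot_gt0 u : u != 0 -> 0 < (u^T *m u) 0 0.
Proof.
move=> un0; rewrite lt_def dot_ge0 andbT; apply/eqP => u0.
by move/eqP: un0; apply; apply: dot_eq0.
Qed.

End BilinearForm.

Section LinearAlgebra.
Variable R : realType.

(* A psd form vanishing at v has v in the kernel of its matrix: the linear
   term of t |-> (v + t u)^T A (v + t u) must vanish, then take u = A v. *)
Lemma psd_kernel p (A : 'M[R]_p) v : A^T = A -> (forall u, 0 <= bf A u u) ->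
  bf A v v = 0 -> A *m v = 0.
Proof.
move=> sA psdA Av0.
have orth u : bf A v u = 0.
  apply: (@nonneg_quad_linear_coef0 _ _ (bf A u u)) => t.
  by have := psdA (v + t *: u); rewrite bf_expand_line // Av0 add0r.
by apply: dot_eq0; have := orth (A *m v); rewrite bf_sym // bf_mulr mulmxA.
Qed.

Lemma ker_factor p q r (A : 'M[R]_(p, r)) (B : 'M[R]_(q, r)) :
  (forall v : 'cV_r, B *m v = 0 -> A *m v = 0) -> exists X, A = X *m B.
Proof.
move=> kerBA; apply/submxP; rewrite submxE; apply/eqP/matrixP => i j.
have : B *m col j (cokermx B) = 0 by rewrite colE mulmxA mulmx_coker mul0mx.
by move/kerBA; rewrite colE mulmxA -colE => /matrixP /(_ i 0); rewrite !mxE.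
Qed.

Lemma sym_range_ker p (A : 'M[R]_p) (y : 'cV[R]_p) : A^T = A ->
  exists z d, y = A *m z + d /\ A *m d = 0.
Proof.
move=> sA; have [X AX] : exists X, A = X *m (A *m A).
  apply: ker_factor => v AAv0; apply: dot_eq0.
  by rewrite trmx_mul sA -mulmxA (mulmxA A A v) AAv0 mulmx0 mxE.
have AXt : A = A *m A *m X^T by rewrite -{1}sA {1}AX !trmx_mul sA.
exists (X^T *m y), (y - A *m (X^T *m y)); split; first by rewrite addrC subrK.
by rewrite mulmxBr !mulmxA -AXt subrr.
Qed.

Lemma psd_cauchy_schwarz p (C : 'M[R]_p) x v : C^T = C ->
  (forall u, 0 <= bf C u u) -> 0 < bf C x x ->
  bf C x v ^+ 2 <= bf C x x * bf C v v.
Proof.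
move=> sC psdC Cx_gt0.
have := psdC (bf C x x *: v + (- bf C x v) *: x).
rewrite bf_expand2 // (bf_sym v x sC).
have -> : bf C x x ^+ 2 * bf C v v + 2 * bf C x x * - bf C x v * bf C x v +
    (- bf C x v) ^+ 2 * bf C x x = bf C x x * (bf C x x * bf C v v - bf C x v ^+ 2).
  by ring.
by rewrite pmulr_rge0 // subr_ge0.
Qed.

End LinearAlgebra.

Section SLemma.
Local Open Scope classical_set_scope.
Variables (R : realType) (p : nat).
Implicit Types (F G : 'M[R]_p) (u v w : 'cV[R]_p).

(* Restricting to the plane spanned by u (with G(u) > 0) and v (with G(v) < 0)
   and applying the planar S-lemma: F(v)/G(v) <= F(u)/G(u). *)
Lemma slemma_ratio F G u v : F^T = F -> G^T = G ->
  (forall w, 0 <= bf G w w -> 0 <= bf F w w) ->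
  0 < bf G u u -> bf G v v < 0 ->
  0 <= bf F v v * bf G u u - bf F u u * bf G v v.
Proof.
move=> sF sG GF Gu_gt0 Gv_lt0.
apply: (plane_slemma (b := bf G u v) (q := bf F u v)) => // s t.
have := GF (s *: u + t *: v); rewrite !bf_expand2 //.
have reorder A : bf A u u * s ^+ 2 + 2 * bf A u v * s * t + bf A v v * t ^+ 2 =
   s ^+ 2 * bf A u u + 2 * s * t * bf A u v + t ^+ 2 * bf A v v by ring.
by rewrite !reorder.
Qed.

(* The S-lemma (Yakubovich): if G has a Slater point and G(w) >= 0 implies
   F(w) >= 0, then F - alpha G >= 0 for some alpha >= 0.  The multiplier is the
   supremum of the ratios F(v)/G(v) over G(v) < 0, bounded by any F(u)/G(u)
   with G(u) > 0. *)
Lemma slemma F G : F^T = F -> G^T = G ->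
  (exists w, 0 < bf G w w) ->
  (forall w, 0 <= bf G w w -> 0 <= bf F w w) ->
  exists alpha, 0 <= alpha /\ forall w, 0 <= bf F w w - alpha * bf G w w.
Proof.
move=> sF sG [w0 Gw0_gt0] GF.
pose E := [set x : R | x = 0 \/ exists v, bf G v v < 0 /\ x = bf F v v / bf G v v].
have ubE u : 0 < bf G u u -> ubound E (bf F u u / bf G u u).
  move=> Gu_gt0 x [->|[v [Gv_lt0 ->]]].
    by apply: divr_ge0; [apply: GF; exact: ltW | exact: ltW].
  have := slemma_ratio sF sG GF Gu_gt0 Gv_lt0; rewrite subr_ge0 => h.
  by rewrite ler_pdivlMr // mulrAC ler_ndivrMr.
have supE : has_sup E by split; [exists 0; left | exists (bf F w0 w0 / bf G w0 w0); exact: ubE].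
exists (sup E); split; first by apply: sup_upper_bound => //; left.
move=> w; have [Gw_lt0|Gw_gt0|Gw0] := ltgtP (bf G w w) 0.
- have : E (bf F w w / bf G w w) by right; exists w.
  by move=> /(sup_upper_bound supE); rewrite ler_ndivrMr // subr_ge0 mulrC.
- have : sup E <= bf F w w / bf G w w by apply: ge_sup; [exists 0; left | exact: ubE].
  by rewrite ler_pdivlMr // subr_ge0.
- by rewrite Gw0 mulr0 subr0; apply: GF; rewrite Gw0.
Qed.

End SLemma.

Section ConeBound.
Local Open Scope classical_set_scope.
Variables (R : realType) (m : nat).
Implicit Types (r : 'rV[R]_m) (s : R).

Definition rnorm2 r : R := (r *m r^T) 0 0.

Lemma rnorm2E r : rnorm2 r = ((r^T)^T *m r^T) 0 0.
Proof. by rewrite trmxK. Qed.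

Lemma rnorm2_ge0 r : 0 <= rnorm2 r.
Proof. by rewrite rnorm2E dot_ge0. Qed.

Lemma rnorm2_eq0 r : rnorm2 r = 0 -> r = 0.
Proof. by rewrite rnorm2E => /dot_eq0 /(congr1 trmx); rewrite trmxK trmx0. Qed.

Lemma rquadZ (A : 'M[R]_m) r s :
  ((s *: r) *m A *m (s *: r)^T) 0 0 = s ^+ 2 * (r *m A *m r^T) 0 0.
Proof. by rewrite linearZ /= -!scalemxAl -scalemxAr !mxE mulrA expr2. Qed.

Lemma rnorm2Z s r : rnorm2 (s *: r) = s ^+ 2 * rnorm2 r.
Proof. by rewrite /rnorm2 linearZ /= -scalemxAl -scalemxAr !mxE mulrA expr2. Qed.

Lemma rnorm2_coord_le1 r i : rnorm2 r = 1 -> `|r 0 i| <= 1.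
Proof.
move=> r1; have : r 0 i ^+ 2 <= 1.
  rewrite -r1 rnorm2E dot_sumE (bigD1 i) //= !mxE lerDl.
  by apply: sumr_ge0 => j _; exact: sqr_ge0.
by move=> ri2; rewrite ler_norml; apply/andP; split; nra.
Qed.

Lemma lin_continuous (u : 'cV[R]_m) : continuous (fun r => (r *m u) 0 0).
Proof.
have -> : (fun r => (r *m u) 0 0) = (fun r => \sum_(i < m) r 0 i * u i 0).
  by apply/funext => r; rewrite mxE.
apply: continuous_big => [|i _ r]; first exact: add_continuous.
apply: (@continuousM R 'rV[R]_m); [exact: coord_continuous | exact: cst_continuous].
Qed.

Lemma quad_continuous (A : 'M[R]_m) : continuous (fun r => (r *m A *m r^T) 0 0).
Proof.
have -> : (fun r => (r *m A *m r^T) 0 0) =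
    (fun r => \sum_(j < m) (r *m col j A) 0 0 * r 0 j).
  apply/funext => r; rewrite mxE; apply: eq_bigr => j _.
  by rewrite !mxE; congr (_ * _); apply: eq_bigr => i _; rewrite !mxE.
apply: continuous_big => [|j _ r]; first exact: add_continuous.
apply: (@continuousM R 'rV[R]_m); [exact: lin_continuous | exact: coord_continuous].
Qed.

Lemma rnorm2_continuous : continuous rnorm2.
Proof.
have -> : rnorm2 = (fun r => (r *m 1%:M *m r^T) 0 0).
  by apply/funext => r; rewrite mulmx1.
exact: quad_continuous.
Qed.

(* A continuous 2-homogeneous function q, positive on a closed cone P away
   from 0, satisfies q >= beta |r|^2 on P for some beta > 0: take for beta the
   minimum of q on the (compact) unit sphere of P. *)
Lemma cone_lower_bound (q : 'rV[R]_m -> R) (P : set 'rV[R]_m) :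
  continuous q -> closed P -> (forall r, P r -> r != 0 -> 0 < q r) ->
  (forall r s, P r -> 0 < s -> P (s *: r)) ->
  (forall r s, q (s *: r) = s ^+ 2 * q r) ->
  exists beta, 0 < beta /\ forall r, P r -> beta * rnorm2 r <= q r.
Proof.
move=> q_cont P_closed q_pos P_cone qZ.
have q0 : q 0 = 0 by have := qZ 0 0; rewrite scale0r expr2 !mul0r.
have rnorm20 : rnorm2 0 = 0 by rewrite /rnorm2 mul0mx mxE.
pose sphere := P `&` (rnorm2 @^-1` [set x | x <= 1] `&` rnorm2 @^-1` [set x | 1 <= x]).
have normalize r : P r -> r != 0 ->
    sphere ((Num.sqrt (rnorm2 r))^-1 *: r) /\ 0 < rnorm2 r.
  move=> Pr rn0.
  have r_gt0 : 0 < rnorm2 r.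
    by rewrite lt_def rnorm2_ge0 andbT; apply: contra_neq rn0; exact: rnorm2_eq0.
  split => //; split; first by apply: P_cone => //; rewrite invr_gt0 sqrtr_gt0.
  have unit : rnorm2 ((Num.sqrt (rnorm2 r))^-1 *: r) = 1.
    by rewrite rnorm2Z exprVn sqr_sqrtr ?mulVf ?rnorm2_ge0 ?gt_eqF.
  by rewrite /= unit lexx.
have [[c0 sphere_c0]|sphere0] := pselect (sphere !=set0); last first.
  exists 1; split => // r Pr; have [->|rn0] := eqVneq r 0; first by rewrite q0 rnorm20 mulr0.
  by exfalso; apply: sphere0; exists ((Num.sqrt (rnorm2 r))^-1 *: r); case: (normalize r Pr rn0).
have sphere_compact : compact sphere.
  apply: bounded_closed_compact.
    exists 1; split; first exact: num_real.
    move=> x x_gt1 r [_ [r_le1 r_ge1]] /=.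
    have r1 : rnorm2 r = 1 by apply/eqP; rewrite eq_le r_le1 r_ge1.
    apply: le_trans (ltW x_gt1); rewrite [X in X <= _]mx_normrE.
    by apply: bigmax_le => // ij _; rewrite (ord1 ij.1); exact: rnorm2_coord_le1.
  apply: closedI => //; apply: closedI; apply: preimage_closed;
    by [move=> x _; exact: rnorm2_continuous | exact: closed_le | exact: closed_ge].
have [c sphere_c c_min] :=
  compact_EVT_min (ex_intro _ c0 sphere_c0) sphere_compact (continuous_subspaceT q_cont).
move: sphere_c; rewrite inE => -[Pc [c_le1 c_ge1]].
have c1 : rnorm2 c = 1 by apply/eqP; rewrite eq_le c_le1 c_ge1.
have cn0 : c != 0 by apply: contra_eq_neq c1 => ->; rewrite rnorm20 eq_sym oner_neq0.
exists (q c); split; first exact: q_pos.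
move=> r Pr; have [->|rn0] := eqVneq r 0; first by rewrite q0 rnorm20 mulr0.
have [sphere_r r_gt0] := normalize r Pr rn0.
have := c_min _ (mem_set sphere_r); rewrite qZ exprVn sqr_sqrtr ?rnorm2_ge0 // => h.
have := ler_wpM2l (ltW r_gt0) h.
by rewrite mulrA divff ?gt_eqF // mul1r mulrC.
Qed.

End ConeBound.

Section BlockForms.
Variables (R : realType) (k n : nat).
Implicit Types (x : 'cV[R]_k) (y d : 'cV[R]_n).

Lemma block_sym_corner (A : 'M[R]_k) (B : 'M[R]_(k, n)) (D : 'M[R]_n) :
  (block_mx A B B^T D)^T = block_mx A B B^T D -> D^T = D.
Proof. by rewrite tr_block_mx trmxK => /eq_block_mx [_ _ _ ->]. Qed.

Lemma bf_block (A : 'M[R]_k) (B : 'M[R]_(k, n)) (C : 'M[R]_(n, k)) (D : 'M[R]_n)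
    x1 y1 x2 y2 :
  bf (block_mx A B C D) (col_mx x1 y1) (col_mx x2 y2) =
  bf A x1 x2 + (x1^T *m B *m y2) 0 0 + (y1^T *m C *m x2) 0 0 + bf D y1 y2.
Proof.
have addE (X Y : 'M[R]_1) : (X + Y) 0 0 = X 0 0 + Y 0 0 by rewrite mxE.
by rewrite /bf tr_col_mx mul_row_block mul_row_col !mulmxDl !addE; lra.
Qed.

Lemma dot_col_mx x y :
  ((col_mx x y)^T *m col_mx x y) 0 0 = (x^T *m x) 0 0 + (y^T *m y) 0 0.
Proof. by rewrite tr_col_mx mul_row_col [LHS]mxE. Qed.

Lemma bf_block_col0r (A : 'M[R]_k) (B : 'M[R]_(k, n)) (C : 'M[R]_(n, k)) (D : 'M[R]_n)
    x y d :
  bf (block_mx A B C D) (col_mx x y) (col_mx 0 d) = (x^T *m B *m d) 0 0 + bf D y d.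
Proof.
by rewrite bf_block !(bf_ker _ (mulmx0 _ _)) mulmx0 [X in _ + X + _]mxE add0r addr0.
Qed.

Lemma bf_block_col0 (A : 'M[R]_k) (B : 'M[R]_(k, n)) (C : 'M[R]_(n, k)) (D : 'M[R]_n) y :
  bf (block_mx A B C D) (col_mx 0 y) (col_mx 0 y) = bf D y y.
Proof. by rewrite bf_block_col0r trmx0 !mul0mx mxE add0r. Qed.

Lemma bf_block_scalar (b : R) x y :
  bf (block_mx (b%:M : 'M[R]_k) 0 0 (0 : 'M[R]_n)) (col_mx x y) (col_mx x y) =
  b * (x^T *m x) 0 0.
Proof.
have zero : (0 : 'M[R]_1) 0 0 = 0 by rewrite mxE.
rewrite bf_block /bf !mulmx0 !mul0mx mul_mx_scalar -scalemxAl zero !addr0.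
by rewrite [LHS]mxE.
Qed.

Lemma bf_qform (A : 'M[R]_(k + n)) (Z : 'M[R]_(n, k)) x :
  bf (qform A Z) x x = bf A (col_mx x (Z *m x)) (col_mx x (Z *m x)).
Proof.
have IZx : col_mx 1%:M Z *m x = col_mx x (Z *m x) by rewrite mul_col_mx mul1mx.
by rewrite /qform /IZ /bf -IZx trmx_mul !mulmxA.
Qed.

Lemma qform_sym (A : 'M[R]_(k + n)) (Z : 'M[R]_(n, k)) :
  A^T = A -> (qform A Z)^T = qform A Z.
Proof. by move=> sA; rewrite /qform !trmx_mul trmxK sA mulmxA. Qed.

End BlockForms.

Section Forward.
Local Open Scope classical_set_scope.
Variables (R : realType) (k n : nat) (M11 N11 : 'M[R]_k) (M12 N12 : 'M[R]_(k, n))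
  (M22 N22 : 'M[R]_n).
Local Notation Mf := (block_mx M11 M12 M12^T M22).
Local Notation Nf := (block_mx N11 N12 N12^T N22).
Implicit Types (x : 'cV[R]_k) (y d : 'cV[R]_n) (r : 'rV[R]_(k + n)) (s : R).

Hypothesis k_gt0 : (0 < k)%N.
Hypothesis sM : Mf^T = Mf.
Hypothesis sN : Nf^T = Nf.
Hypothesis nsdM22 : forall v, 0 <= bf (- M22) v v.
Hypothesis nsdN22 : forall v, 0 <= bf (- N22) v v.
Hypothesis kerN : forall v : 'cV_n, N22 *m v = 0 -> N12 *m v = 0.
Variable Zbar : 'M[R]_(n, k).
Hypothesis Zbar_pd : forall v : 'cV[R]_k, v != 0 -> 0 < bf (qform Nf Zbar) v v.
Hypothesis M_pos : forall Z, S_N Nf Z -> pd (qform Mf Z).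

Lemma M22_sym : M22^T = M22. Proof. exact: block_sym_corner sM. Qed.
Lemma N22_sym : N22^T = N22. Proof. exact: block_sym_corner sN. Qed.

Lemma const1_neq0 : (const_mx 1 : 'cV[R]_k) != 0.
Proof.
by apply/eqP => /matrixP /(_ (Ordinal k_gt0) 0); rewrite !mxE => /eqP; rewrite oner_eq0.
Qed.

Lemma N22_particular : exists Z0 : 'M[R]_(n, k), N22 *m Z0 = - N12^T.
Proof.
have [X N12X] := ker_factor kerN.
by exists (- X^T); rewrite mulmxN N12X trmx_mul -{1}N22_sym.
Qed.

Section ParticularSolution.
Variable Z0 : 'M[R]_(n, k).
Hypothesis N22Z0 : N22 *m Z0 = - N12^T.

(* Completing the square: the N-value at [v; Z0 v + d] splits into the
   value of qform N Z0 at v and the N22-value at d. *)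
Lemma bf_N_shift v d : bf Nf (col_mx v (Z0 *m v + d)) (col_mx v (Z0 *m v + d)) =
  bf (qform Nf Z0) v v + bf N22 d d.
Proof.
have Z0N22 : Z0^T *m N22 = - N12.
  by rewrite -[N22]N22_sym -trmx_mul N22Z0 linearN /= trmxK.
have -> : col_mx v (Z0 *m v + d) = col_mx v (Z0 *m v) + col_mx 0 d.
  by rewrite add_col_mx addr0.
rewrite bf_expand // -bf_qform bf_block_col0.
have -> : bf Nf (col_mx v (Z0 *m v)) (col_mx 0 d) = 0.
  rewrite bf_block_col0r /bf trmx_mul -(mulmxA v^T Z0^T) Z0N22 mulmxN mulNmx.
  by rewrite [X in _ + X]mxE addrN.
by rewrite mulr0 addr0.
Qed.

(* qform N Zbar = qform N Z0 + (Zbar - Z0)^T N22 (Zbar - Z0) <= qform N Z0,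
   so qform N Z0 is positive definite too. *)
Lemma qform_Z0_pd v : v != 0 -> 0 < bf (qform Nf Z0) v v.
Proof.
move=> vn0; have := Zbar_pd vn0; rewrite bf_qform.
have -> : Zbar *m v = Z0 *m v + (Zbar *m v - Z0 *m v) by rewrite addrC subrK.
by rewrite bf_N_shift; have := nsdN22 (Zbar *m v - Z0 *m v); rewrite bfMN; lra.
Qed.

(* Step 1.  Given x <> 0 and y with [x; y] N-nonnegative, the rank-one update
   Z := Z0 + c^-1 (y - Z0 x) x^T C of Z0, where C = qform N Z0 and c = x^T C x,
   satisfies Z x = y and, by Cauchy-Schwarz for C, lies in S_N. *)
Lemma M_pos_pointwise x y : x != 0 -> 0 <= bf Nf (col_mx x y) (col_mx x y) ->
  0 < bf Mf (col_mx x y) (col_mx x y).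
Proof.
move=> xn0 Nxy_ge0.
set C := qform Nf Z0; set c := bf C x x; set e := y - Z0 *m x.
have sC : C^T = C by exact: qform_sym.
have psdC u : 0 <= bf C u u.
  by have [->|un0] := eqVneq u 0; [rewrite bf0l | exact/ltW/qform_Z0_pd].
have c_gt0 : 0 < c := qform_Z0_pd xn0.
have ye : y = Z0 *m x + e by rewrite /e addrC subrK.
have Ne_ge0 : 0 <= c + bf N22 e e by rewrite /c /C -bf_N_shift -ye.
pose Z := Z0 + c^-1 *: (e *m (x^T *m C)).
have ZE v : Z *m v = Z0 *m v + (c^-1 * bf C x v) *: e.
  rewrite mulmxDl -scalemxAl -mulmxA [(x^T *m C) *m v]mx11_scalar.
  by rewrite mul_mx_scalar scalerA.
have Z_SN : S_N Nf Z.
  move=> v; rewrite -/(bf (qform Nf Z) v v) bf_qform ZE bf_N_shift bfZl bfZr.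
  set a := c^-1 * bf C x v.
  have Cxv : bf C x v = a * c by rewrite /a mulrAC mulVf ?mul1r // gt_eqF.
  have := psd_cauchy_schwarz v sC psdC c_gt0; rewrite Cxv -/c => cs.
  have a2c : a ^+ 2 * c <= bf C v v.
    by rewrite -(@ler_pM2l _ c) //; move: cs; rewrite !expr2; nra.
  by nra.
have := M_pos Z_SN xn0; rewrite -/(bf (qform Mf Z) x x) bf_qform ZE.
by rewrite mulVf ?gt_eqF // scale1r -ye.
Qed.

End ParticularSolution.

Lemma M_pos_on_N_nonneg x y : x != 0 -> 0 <= bf Nf (col_mx x y) (col_mx x y) ->
  0 < bf Mf (col_mx x y) (col_mx x y).
Proof.
move=> xn0 Nxy; have [Z0 N22Z0] := N22_particular.
exact: (M_pos_pointwise N22Z0 xn0 Nxy).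
Qed.

(* The directions [0; d] with N22 d = 0 are in the kernel of N ... *)
Lemma N_ker_col0 d : N22 *m d = 0 -> Nf *m col_mx 0 d = 0.
Proof. by move=> N22d; rewrite mul_block_col !mulmx0 !add0r N22d kerN // col_mx0. Qed.

(* ... so the N-value is constant on the line [x; Zbar x] + t [0; d], and
   positivity of M along it forces M22 d = 0 and x^T M12 d = 0. *)
Lemma M_cross_ker d x : N22 *m d = 0 -> x != 0 ->
  M22 *m d = 0 /\ (x^T *m (M12 *m d)) 0 0 = 0.
Proof.
move=> N22d xn0; set q : 'cV[R]_(k + n) := col_mx 0 d; set w := col_mx x (Zbar *m x).
have wq t : w + t *: q = col_mx x (Zbar *m x + t *: d).
  by rewrite /w /q scale_col_mx scaler0 add_col_mx addr0.
have Nw_gt0 : 0 < bf Nf w w by rewrite /w -bf_qform; exact: Zbar_pd.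
have M_line t : 0 < bf Mf w w + 2 * t * bf Mf w q + t ^+ 2 * bf Mf q q.
  rewrite -bf_expand_line // wq; apply: M_pos_on_N_nonneg => //.
  rewrite -wq bf_expand_line // !(bf_ker _ (N_ker_col0 N22d)) !mulr0 !addr0.
  exact: ltW.
have Mq_le0 : bf Mf q q <= 0.
  by rewrite bf_block_col0; have := nsdM22 d; rewrite bfMN; lra.
have [Mq0 Mwq0] := pos_quad_nonpos_lead M_line Mq_le0.
have M22d : M22 *m d = 0.
  apply/eqP; rewrite -oppr_eq0 -mulNmx; apply/eqP.
  apply: psd_kernel => //; first by rewrite linearN /= M22_sym.
  by rewrite bfMN -(bf_block_col0 M11 M12 M12^T) -/q Mq0 oppr0.
split => //; move: Mwq0; rewrite bf_block_col0r (bf_ker _ M22d) addr0.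
by rewrite mulmxA.
Qed.

Lemma M_ker_col0 d : N22 *m d = 0 -> Mf *m col_mx 0 d = 0.
Proof.
move=> N22d; have [M22d _] := M_cross_ker N22d const1_neq0.
have M12d : M12 *m d = 0.
  have [//|M12dn0] := eqVneq (M12 *m d) 0.
  by have [_ /dot_eq0] := M_cross_ker N22d M12dn0.
by rewrite mul_block_col !mulmx0 !add0r M22d M12d col_mx0.
Qed.

Definition Ncone : set 'rV[R]_(k + n) :=
  (fun r => (r *m Nf *m r^T) 0 0) @^-1` [set z | 0 <= z] `&`
  \bigcap_(d in [set d | N22 *m d = 0])
     (fun r => (r *m col_mx (0 : 'cV[R]_k) d) 0 0) @^-1` [set z | z = 0].

Lemma Ncone_closed : closed Ncone.
Proof.
apply: closedI.
  by apply: preimage_closed; [move=> r _; exact: quad_continuous | exact: closed_ge].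
apply: closed_bigI => d _; apply: preimage_closed; last exact: closed_eq.
by move=> r _; exact: lin_continuous.
Qed.

Lemma Ncone_scale r s : Ncone r -> Ncone (s *: r).
Proof.
move=> [Nr_ge0 r_orth]; split.
  by rewrite /= rquadZ; apply: mulr_ge0 => //; exact: sqr_ge0.
by move=> d N22d; rewrite /= -scalemxAl mxE (r_orth d N22d) mulr0.
Qed.

(* On the cone, M is positive away from 0: either the top block of w is
   nonzero (Step 1), or w = [0; y] with y in ker N22 and orthogonal to it. *)
Lemma Ncone_pos r : Ncone r -> r != 0 -> 0 < (r *m Mf *m r^T) 0 0.
Proof.
move=> [Nr_ge0 r_orth] rn0; set w := r^T.
have wE : w = col_mx (usubmx w) (dsubmx w) by rewrite vsubmxK.
rewrite -bf_tr -/w wE.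
have [x0|xn0] := eqVneq (usubmx w) 0; last first.
  by apply: M_pos_on_N_nonneg => //; rewrite -wE /w bf_tr.
exfalso; move/eqP: rn0; apply.
set y := dsubmx w; rewrite x0 -/y in wE.
have Ny_ge0 : 0 <= bf N22 y y by rewrite -(bf_block_col0 N11 N12 N12^T) -wE /w bf_tr.
have N22y : N22 *m y = 0.
  apply/eqP; rewrite -oppr_eq0 -mulNmx; apply/eqP.
  apply: psd_kernel => //; first by rewrite linearN /= N22_sym.
  by have := nsdN22 y; rewrite !bfMN; lra.
have := r_orth y N22y; rewrite /= -[r]trmxK -/w wE tr_col_mx mul_row_col.
rewrite trmx0 mul0mx add0r => /dot_eq0 y0.
by rewrite y0 trmx0 row_mx0.
Qed.

(* Step 2.  The uniform margin: w^T M w >= beta |x|^2 whenever w = [x; y] is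
   N-nonnegative.  Write y = N22 z + d with N22 d = 0; dropping d changes
   neither form, and [x; N22 z]^T lies in the cone. *)
Lemma uniform_margin : exists beta, 0 < beta /\ forall x y,
  0 <= bf Nf (col_mx x y) (col_mx x y) ->
  beta * (x^T *m x) 0 0 <= bf Mf (col_mx x y) (col_mx x y).
Proof.
have [beta [beta_gt0 margin]] := cone_lower_bound (@quad_continuous _ _ Mf)
  Ncone_closed Ncone_pos (fun r s Pr _ => Ncone_scale s Pr) (@rquadZ _ _ Mf).
exists beta; split => // x y Nxy_ge0.
have [z [d [yE N22d]]] := sym_range_ker y N22_sym.
set w := col_mx x (N22 *m z).
have drop_d A : A^T = A -> A *m col_mx 0 d = 0 ->
    bf A (col_mx x y) (col_mx x y) = bf A w w.
  move=> sA Ad0; have -> : col_mx x y = w + col_mx 0 d by rewrite yE add_col_mx addr0.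
  by rewrite bf_expand // !(bf_ker _ Ad0) mulr0 !addr0.
rewrite (drop_d _ sN (N_ker_col0 N22d)) in Nxy_ge0.
rewrite (drop_d _ sM (M_ker_col0 N22d)).
have w_cone : Ncone w^T.
  split; first by rewrite /= -bf_tr trmxK.
  move=> d' N22d'; rewrite /= /w tr_col_mx mul_row_col mulmx0 add0r.
  by rewrite trmx_mul N22_sym -mulmxA N22d' mulmx0 mxE.
have := margin _ w_cone; rewrite -bf_tr trmxK; apply: le_trans.
apply: ler_wpM2l; first exact: ltW.
by rewrite /rnorm2 trmxK dot_col_mx lerDl dot_ge0.
Qed.

(* Step 3.  The S-lemma for M - diag(beta I, 0) and N. *)
Lemma forward : exists alpha beta : R, 0 <= alpha /\ 0 < beta /\
  psd (Mf - alpha *: Nf - block_mx (beta%:M : 'M[R]_k) 0 0 (0 : 'M[R]_n)).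
Proof.
have [beta [beta_gt0 margin]] := uniform_margin.
set B := block_mx (beta%:M : 'M[R]_k) 0 0 (0 : 'M[R]_n).
have sMB : (Mf - B)^T = Mf - B.
  by rewrite linearB /= sM /B tr_block_mx tr_scalar_mx !trmx0.
have slater : exists w, 0 < bf Nf w w.
  exists (col_mx (const_mx 1) (Zbar *m const_mx 1)).
  by rewrite -bf_qform; exact: Zbar_pd const1_neq0.
have NMB w : 0 <= bf Nf w w -> 0 <= bf (Mf - B) w w.
  by rewrite -[w]vsubmxK bfMB bf_block_scalar subr_ge0; exact: margin.
have [alpha [alpha_ge0 MBaN]] := slemma sMB sN slater NMB.
exists alpha, beta; do 2!split => //.
by move=> v; rewrite -/(bf _ v v) !bfMB bfMZ; have := MBaN v; rewrite bfMB; lra.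
Qed.

End Forward.

(* The converse holds for any M, N: on w = [v; Z v] with Z in S_N,
   w^T M w >= alpha w^T N w + beta |v|^2 > 0. *)
Lemma backward (R : realType) (k n : nat) (M N : 'M[R]_(k + n)) alpha beta :
  0 <= alpha -> 0 < beta ->
  psd (M - alpha *: N - block_mx (beta%:M : 'M[R]_k) 0 0 (0 : 'M[R]_n)) ->
  forall Z, S_N N Z -> pd (qform M Z).
Proof.
move=> alpha_ge0 beta_gt0 psdF Z NZ v vn0.
rewrite -/(bf (qform M Z) v v) bf_qform.
have := psdF (col_mx v (Z *m v)); rewrite -/(bf _ _ _) !bfMB bfMZ bf_block_scalar.
have := NZ v; rewrite -/(bf _ _ _) bf_qform => Nw_ge0.
have := mulr_ge0 alpha_ge0 Nw_ge0; have := mulr_gt0 beta_gt0 (dot_gt0 vn0); lra.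
Qed.

Theorem theorem6 (R : realType) (k n : nat)
  (M11 N11 : 'M[R]_k) (M12 N12 : 'M[R]_(k, n)) (M22 N22 : 'M[R]_n) :
  (0 < k)%N ->
  sym_mx (block_mx M11 M12 M12^T M22) ->
  sym_mx (block_mx N11 N12 N12^T N22) ->
  psd (- M22) -> psd (- N22) ->
  (forall v : 'cV[R]_n, N22 *m v = 0 -> N12 *m v = 0) ->
  (exists Zbar : 'M[R]_(n, k), pd (qform (block_mx N11 N12 N12^T N22) Zbar)) ->
  ((forall Z : 'M[R]_(n, k), S_N (block_mx N11 N12 N12^T N22) Z ->
       pd (qform (block_mx M11 M12 M12^T M22) Z))
   <->
   (exists alpha beta : R, 0 <= alpha /\ 0 < beta /\
      psd (block_mx M11 M12 M12^T M22 - alpha *: block_mx N11 N12 N12^T N22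
           - block_mx (beta%:M : 'M[R]_k) 0 0 (0 : 'M[R]_n)))).
Proof.
move=> k_gt0 sM sN nsdM22 nsdN22 kerN [Zbar Zbar_pd]; split.
- exact: forward k_gt0 sM sN nsdM22 nsdN22 kerN Zbar Zbar_pd.
- by move=> [alpha [beta [alpha_ge0 [beta_gt0 psdF]]]]; exact: backward psdF.
Qed.
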